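(* Assume (V1), (V2), (V3), and (In), and let $\delta>0$. Then for every $n\in\mathbb{N}$ and all $t\ge\delta$, $$\mathrm{TV}[v(\hat\rho^n(t))]=\mathrm{TV}[v(\check\rho^n(t))]\le C_\delta,\qquad C_\delta:=3(v_{\max}-v(R))+2\,\frac{\bar x_{\max}-\bar x_{\min}}{\delta}.$$ In particular $(v(\hat\rho^n))_n$ is uniformly bounded in $L^\infty([\delta,\infty);BV(\mathbb{R};[v(R),v_{\max}]))$ and $(v(\check\rho^n))_n$ is uniformly bounded in $L^\infty([\delta,\infty);BV([0,L];[v(R),v_{\max}]))$.
   Context: (V1): $v\in C^1([0,\infty))$ strictly decreasing; (V2): $v(0)=v_{\max}\in\mathbb{R}$; (V3): $\rho\mapsto\rho\,v'(\rho)$ is non-increasing on $[0,\infty)$. $\mathcal{M}_L$: nonnegative compactly supported Radon measures on $\mathbb{R}$ of mass $L>0$. (In): $\bar\rho\in\mathcal{M}_L\cap L^\infty(\mathbb{R})$; $R:=\|\bar\rho\|_{L^\infty}$; $[\bar x_{\min},\bar x_{\max}]$ smallest closed interval containing $\mathrm{supp}\,\bar\rho$. For $n\in\mathbb{N}$: $N_n=2^n$, $\ell_n=2^{-n}L$, $\bar x^n_0=\bar x_{\min}$, $\bar x^n_i=\sup\{x:\int_{\bar x^n_{i-1}}^x\bar\rho<\ell_n\}$; $(x^n_i(t))$ solves $\dot x^n_{N_n}=v_{\max}$, $\dot x^n_i=v(\ell_n/(x^n_{i+1}-x^n_i))$, $x^n_i(0)=\bar x^n_i$; $y^n_i:=\ell_n/(x^n_{i+1}-x^n_i)$.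 $\hat\rho^n(t,x):=\sum_{i=0}^{N_n-1}y^n_i(t)\chi_{[x^n_i(t),x^n_{i+1}(t))}(x)$, $\check\rho^n(t,z):=\sum_{i=0}^{N_n-1}y^n_i(t)\chi_{[i\ell_n,(i+1)\ell_n)}(z)$, $z\in[0,L]$. *)

From Stdlib Require Import Reals Lra List Sorted ClassicalEpsilon.
Open Scope R_scope.

(** Supremum of a set of reals (the least upper bound when the set is
    nonempty and bounded above; junk value 0 otherwise). *)
Definition Rsup (E : R -> Prop) : R :=
  match excluded_middle_informative (bound E /\ exists x, E x) with
  | left H => proj1_sig (completeness E (proj1 H) (proj2 H))
  | right _ => 0
  end.

Fixpoint sumR (N : nat) (f : nat -> R) : R :=
  match N with
  | O => 0
  | S k => sumR k f + f k
  end.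

Definition ind_co (a b X : R) : R :=
  if Rle_dec a X then (if Rlt_dec X b then 1 else 0) else 0.

Definition Nn (n : nat) : nat := (2 ^ n)%nat.
Definition elln (L : R) (n : nat) : R := L / 2 ^ n.

(** Initial particle positions:  xbar_0 = xmin,
    xbar_i = sup { x | int_{xbar_{i-1}}^x rhobar < l },
    where G is the cumulative mass G(x) = int_{-oo}^x rhobar. *)
Fixpoint xbar (G : R -> R) (xmin l : R) (i : nat) : R :=
  match i with
  | O => xmin
  | S k => Rsup (fun x => G x - G (xbar G xmin l k) < l)
  end.

Definition ydisc (x : nat -> R -> R) (l : R) (i : nat) (t : R) : R :=
  l / (x (S i) t - x i t).

Definition rho_hat (x : nat -> R -> R) (l : R) (N : nat) (t X : R) : R :=
  sumR N (fun i => ydisc x l i t * ind_co (x i t) (x (S i) t) X).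

Definition rho_check (x : nat -> R -> R) (l : R) (N : nat) (t z : R) : R :=
  sumR N (fun i => ydisc x l i t * ind_co (INR i * l) (INR (S i) * l) z).

(** The follow-the-leader system:  x_N' = v_max = v 0,
    x_i' = v(l/(x_{i+1}-x_i)), x_i(0) = xb_i, solved on [0,oo)
    (ODE for t > 0, continuity at t = 0, gaps positive so y_i makes sense). *)
Definition FTL_solution (v : R -> R) (N : nat) (l : R) (xb : nat -> R)
    (x : nat -> R -> R) : Prop :=
  (forall i, (i <= N)%nat -> x i 0 = xb i) /\
  (forall i, (i < N)%nat -> forall t, 0 <= t -> x i t < x (S i) t) /\
  (forall i, (i <= N)%nat -> forall eps, 0 < eps -> exists d, 0 < d /\
      forall t, 0 <= t < d -> Rabs (x i t - x i 0) < eps) /\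
  (forall t, 0 < t -> derivable_pt_lim (x N) t (v 0)) /\
  (forall i, (i < N)%nat -> forall t, 0 < t ->
      derivable_pt_lim (x i) t (v (ydisc x l i t))).

Fixpoint variation (f : R -> R) (l : list R) : R :=
  match l with
  | a :: ((b :: _) as tl) => Rabs (f b - f a) + variation f tl
  | _ => 0
  end.

Definition TV_le (f : R -> R) (C : R) : Prop :=
  forall l, Sorted Rlt l -> variation f l <= C.

Definition TV (f : R -> R) : R :=
  Rsup (fun s => exists l, Sorted Rlt l /\ s = variation f l).

(* Both densities are step functions taking the values y_0, ..., y_(N-1) on consecutive cells
   and 0 outside, so v composed with either of them has the same total variation: the sum of
   the jumps between consecutive values, with v(0) = v_max at both ends.  Along the
   follow-the-leader dynamics a first-touching-time argument gives the maximum principle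
   y_k <= R and, through (V3), the one-sided Oleinik estimate
   t (v(y_(k+1)) - v(y_k)) <= x_(k+1) - x_k.  Hence the upward jumps add up to at most
   (x_N(t) - x_0(t)) / t <= (xbar_max - xbar_min) / t + v_max - v(R), and since the jumps
   of this closed path sum to zero the total variation is twice that. *)

From Stdlib Require Import Reals Lra Lia Arith List Sorted Classical ClassicalEpsilon.
Open Scope R_scope.

Lemma sumR_ext N f g : (forall i, (i < N)%nat -> f i = g i) -> sumR N f = sumR N g.
Proof.
  induction N as [|N IH]; intros H; simpl; [reflexivity|].
  rewrite IH by (intros; apply H; lia). rewrite H by lia. reflexivity.
Qed.

Lemma sumR_shift N f : sumR (S N) f = f 0%nat + sumR N (fun k => f (S k)).
Proof. induction N as [|N IH]; simpl in *; [lra|]. rewrite IH. lra. Qed.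

Lemma sumR_telescope N (U : nat -> R) : sumR N (fun k => U (S k) - U k) = U N - U 0%nat.
Proof. induction N as [|N IH]; simpl; [lra|]. rewrite IH. lra. Qed.

Lemma sumR_le N f g : (forall i, (i < N)%nat -> f i <= g i) -> sumR N f <= sumR N g.
Proof.
  induction N as [|N IH]; intros H; simpl; [lra|].
  assert (sumR N f <= sumR N g) by (apply IH; intros; apply H; lia).
  assert (f N <= g N) by (apply H; lia). lra.
Qed.

Lemma sumR_ge0 N f : (forall i, (i < N)%nat -> 0 <= f i) -> 0 <= sumR N f.
Proof.
  intros H. apply Rle_trans with (sumR N (fun _ => 0)); [|now apply sumR_le].
  clear. induction N; simpl; lra.
Qed.

Lemma sumR_single N f j : (forall i, (i < N)%nat -> i <> j -> f i = 0) ->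
  sumR N f = if Nat.ltb j N then f j else 0.
Proof.
  induction N as [|N IH]; intros H; simpl; [reflexivity|].
  rewrite IH by (intros; apply H; lia).
  destruct (Nat.ltb_spec j N), (Nat.ltb_spec j (S N)); try lia.
  - rewrite (H N) by lia. lra.
  - replace j with N by lia. lra.
  - rewrite (H N) by lia. lra.
Qed.

Lemma Rabs_sub_le_sum_increments (U : nat -> R) a b : (a <= b)%nat ->
  Rabs (U b - U a) <= sumR b (fun k => Rabs (U (S k) - U k))
                      - sumR a (fun k => Rabs (U (S k) - U k)).
Proof.
  induction 1 as [|b _ IH].
  - unfold Rminus. rewrite !Rplus_opp_r, Rabs_R0. lra.
  - simpl. pose proof (Rabs_triang (U (S b) - U b) (U b - U a)).
    replace (U (S b) - U b + (U b - U a)) with (U (S b) - U a) in H by ring. lra.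
Qed.

(* A closed path ([U M = U 0]) climbs as much as it descends. *)
Lemma sumR_abs_increments_loop M (U : nat -> R) : U M = U 0%nat ->
  sumR M (fun k => Rabs (U (S k) - U k)) = 2 * sumR M (fun k => Rmax (U (S k) - U k) 0).
Proof.
  intros Hloop.
  assert (Hpt : forall a, Rabs a = 2 * Rmax a 0 - a).
  { intros a. unfold Rmax. destruct (Rle_dec a 0);
      [rewrite Rabs_left1 | rewrite Rabs_right]; lra. }
  assert (Hsum : forall f g, sumR M (fun k => 2 * f k - g k) = 2 * sumR M f - sumR M g).
  { intros f g. clear. induction M as [|M IH]; simpl; [lra|]. rewrite IH. lra. }
  rewrite (sumR_ext M _ (fun k => 2 * Rmax (U (S k) - U k) 0 - (U (S k) - U k)))
    by (intros; apply Hpt).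
  rewrite Hsum, sumR_telescope, Hloop. lra.
Qed.

Definition step_function (p c : nat -> R) (N : nat) (X : R) : R :=
  sumR N (fun i => c i * ind_co (p i) (p (S i)) X).

(* Cell [0] is left of [p 0], cell [S j] is [[p j, p (S j))] and cell [S N] is right of [p N]. *)
Definition in_cell (p : nat -> R) (N : nat) (X : R) (k : nat) : Prop :=
  (k <= S N)%nat /\ (k = 0%nat \/ p (pred k) <= X) /\ (k = S N \/ X < p k).

Definition step_value (c : nat -> R) (N k : nat) : R :=
  match k with O => 0 | S j => if Nat.ltb j N then c j else 0 end.

Definition jump_sum (c : nat -> R) (N : nat) (phi : R -> R) : R :=
  sumR (S N) (fun k => Rabs (phi (step_value c N (S k)) - phi (step_value c N k))).

Lemma ind_co_in a b X : a <= X -> X < b -> ind_co a b X = 1.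
Proof. intros. unfold ind_co. destruct (Rle_dec a X), (Rlt_dec X b); lra. Qed.

Lemma ind_co_left a b X : X < a -> ind_co a b X = 0.
Proof. intros. unfold ind_co. destruct (Rle_dec a X); [lra | reflexivity]. Qed.

Lemma ind_co_right a b X : b <= X -> ind_co a b X = 0.
Proof. intros. unfold ind_co. destruct (Rle_dec a X), (Rlt_dec X b); lra. Qed.

Section Cells.
Variables (p : nat -> R) (N : nat).
Hypothesis Hp : forall i, (i < N)%nat -> p i < p (S i).

Lemma breakpoints_le i j : (i <= j)%nat -> (j <= N)%nat -> p i <= p j.
Proof.
  induction 1 as [|j Hij IH]; intros HjN; [lra|].
  assert (p i <= p j) by (apply IH; lia). assert (p j < p (S j)) by (apply Hp; lia). lra.
Qed.

Lemma in_cell_exists X : exists k, in_cell p N X k.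
Proof.
  assert (H : forall m, (m <= S N)%nat ->
            (exists k, (k < m)%nat /\ in_cell p N X k) \/ m = 0%nat \/ p (pred m) <= X).
  { induction m as [|m IH]; intros Hm; [now right; left|].
    destruct (IH ltac:(lia)) as [[k [Hk Hin]] | Hr].
    - left. exists k. split; [lia | exact Hin].
    - destruct (Rlt_dec X (p m)).
      + left. exists m. repeat split; auto; lia.
      + right; right. simpl. lra. }
  destruct (H (S N) (le_n _)) as [[k [_ Hk]] | [Hr | Hr]]; [eauto | discriminate |].
  exists (S N). repeat split; auto.
Qed.

Lemma in_cell_mono a b ka kb : a < b -> in_cell p N a ka -> in_cell p N b kb -> (ka <= kb)%nat.
Proof.
  intros Hab [Hka [Ha _]] [_ [_ Hb]].
  destruct (le_lt_dec ka kb) as [|Hlt]; [assumption|]. exfalso.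
  destruct Hb as [Hb|Hb]; [lia|]. destruct Ha as [Ha|Ha]; [lia|].
  assert (p kb <= p (pred ka)) by (apply breakpoints_le; lia). lra.
Qed.

Lemma step_function_in_cell c X k : in_cell p N X k -> step_function p c N X = step_value c N k.
Proof.
  intros [Hk [Hl Hr]]. unfold step_function.
  set (j := match k with O => N | S j => j end).
  rewrite (sumR_single N _ j).
  - destruct k as [|k]; simpl; [now rewrite Nat.ltb_irrefl|]. unfold j.
    destruct (Nat.ltb_spec k N); [|reflexivity].
    destruct Hl as [|Hl]; [lia|]. destruct Hr as [|Hr]; [lia|].
    rewrite ind_co_in by assumption. lra.
  - intros i Hi Hij. destruct k as [|k].
    + destruct Hr as [|Hr]; [lia|]. rewrite ind_co_left; [lra|].
      assert (p 0%nat <= p i) by (apply breakpoints_le; lia). lra.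
    + destruct Hl as [|Hl]; [lia|]. simpl in Hl. unfold j in Hij.
      destruct (le_lt_dec i k).
      * rewrite ind_co_right; [lra|].
        assert (p (S i) <= p k) by (apply breakpoints_le; lia). lra.
      * destruct Hr as [|Hr]; [lia|]. rewrite ind_co_left; [lra|].
        assert (p (S k) <= p i) by (apply breakpoints_le; lia). lra.
Qed.
End Cells.

Lemma variation_cons2 f a b l : variation f (a :: b :: l) = Rabs (f b - f a) + variation f (b :: l).
Proof. reflexivity. Qed.

Section StepVariation.
Variables (p c : nat -> R) (N : nat) (phi : R -> R).
Hypothesis Hp : forall i, (i < N)%nat -> p i < p (S i).

Let U k := phi (step_value c N k).
Let partial j := sumR j (fun k => Rabs (U (S k) - U k)).

Lemma partial_mono a b : (a <= b)%nat -> partial a <= partial b.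
Proof.
  intros H. pose proof (Rabs_sub_le_sum_increments U a b H). pose proof (Rabs_pos (U b - U a)).
  unfold partial. lra.
Qed.

Lemma variation_step_from l : forall a ka, Sorted Rlt (a :: l) -> in_cell p N a ka ->
  variation (fun X => phi (step_function p c N X)) (a :: l) <= partial (S N) - partial ka.
Proof.
  induction l as [|b l IH]; intros a ka Hs Hka.
  - simpl. pose proof (partial_mono ka (S N) (proj1 Hka)). lra.
  - rewrite variation_cons2. destruct (in_cell_exists p N b) as [kb Hkb].
    apply Sorted_inv in Hs as [Hs Hab]. apply HdRel_inv in Hab.
    pose proof (in_cell_mono p N Hp a b ka kb Hab Hka Hkb) as Hk.
    pose proof (IH b kb Hs Hkb).
    rewrite (step_function_in_cell p N Hp c a ka Hka), (step_function_in_cell p N Hp c b kb Hkb).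
    pose proof (Rabs_sub_le_sum_increments U ka kb Hk). unfold partial, U in *. lra.
Qed.

Lemma variation_step_le l : Sorted Rlt l ->
  variation (fun X => phi (step_function p c N X)) l <= jump_sum c N phi.
Proof.
  intros Hs. destruct l as [|a l].
  - apply sumR_ge0. intros; apply Rabs_pos.
  - destruct (in_cell_exists p N a) as [ka Hka].
    pose proof (variation_step_from l a ka Hs Hka).
    assert (0 <= partial ka) by (apply sumR_ge0; intros; apply Rabs_pos).
    unfold jump_sum. fold (U 0%nat). unfold partial, U in *. lra.
Qed.

(* One sample point in each of the [N + 2] cells realises every jump. *)
Let sample k := match k with O => p O - 1 | S j => p j end.

Lemma sample_in_cell k : (k <= S N)%nat -> in_cell p N (sample k) k.
Proof.
  intros Hk. split; [exact Hk|]. destruct k as [|j]; simpl.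
  - split; [now left | right; lra].
  - split; [right; lra|]. destruct (Nat.eq_dec j N) as [->|]; [now left | right; apply Hp; lia].
Qed.

Lemma samples_sorted m a : (forall k, (a <= k < a + m)%nat -> sample k < sample (S k)) ->
  Sorted Rlt (map sample (seq a (S m))).
Proof.
  revert a. induction m as [|m IH]; intros a H; [repeat constructor|].
  change (Sorted Rlt (sample a :: map sample (seq (S a) (S m)))).
  constructor; [apply IH; intros; apply H; lia|].
  constructor. apply H; lia.
Qed.

Lemma variation_samples m a (g : R -> R) : variation g (map sample (seq a (S m))) =
  sumR m (fun i => Rabs (g (sample (S (a + i))) - g (sample (a + i)))).
Proof.
  revert a. induction m as [|m IH]; intros a; [reflexivity|].
  change (map sample (seq a (S (S m)))) with (sample a :: sample (S a) :: map sample (seq (S (S a)) m)).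
  rewrite variation_cons2, sumR_shift, Nat.add_0_r.
  change (sample (S a) :: map sample (seq (S (S a)) m)) with (map sample (seq (S a) (S m))).
  rewrite IH. f_equal. apply sumR_ext. intros i _. now rewrite Nat.add_succ_r.
Qed.

Lemma variation_step_attained : exists l, Sorted Rlt l /\
  variation (fun X => phi (step_function p c N X)) l = jump_sum c N phi.
Proof.
  exists (map sample (seq 0 (S (S N)))). split.
  - apply samples_sorted. intros [|j] Hk; simpl; [lra | apply Hp; lia].
  - rewrite variation_samples. apply sumR_ext. intros i Hi. simpl.
    rewrite (step_function_in_cell p N Hp c _ (S i)) by (apply sample_in_cell; lia).
    rewrite (step_function_in_cell p N Hp c _ i) by (apply sample_in_cell; lia).
    reflexivity.
Qed.

End StepVariation.

Lemma Rsup_of_max E M : E M -> (forall s, E s -> s <= M) -> Rsup E = M.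
Proof.
  intros HM Hb. unfold Rsup. destruct excluded_middle_informative as [H|H].
  - destruct (completeness E _ _) as [m [Hub Hlub]]. simpl.
    apply Rle_antisym; [apply Hlub; exact Hb | apply Hub; exact HM].
  - exfalso. apply H. split; [exists M; exact Hb | eauto].
Qed.

Lemma Rsup_is_lub E : bound E -> (exists x, E x) -> is_lub E (Rsup E).
Proof.
  intros Hb He. unfold Rsup. destruct excluded_middle_informative as [H|H].
  - destruct (completeness E _ _) as [m Hm]. exact Hm.
  - exfalso. auto.
Qed.

Lemma TV_step_function p c N phi : (forall i, (i < N)%nat -> p i < p (S i)) ->
  TV (fun X => phi (step_function p c N X)) = jump_sum c N phi /\
  TV_le (fun X => phi (step_function p c N X)) (jump_sum c N phi).
Proof.
  intros Hp. split.
  - apply Rsup_of_max.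
    + destruct (variation_step_attained p c N phi Hp) as [l [Hs Hl]]. eauto.
    + intros s [l [Hs ->]]. now apply variation_step_le.
  - intros l Hs. now apply variation_step_le.
Qed.

Lemma step_function_range p c N b X : (forall i, (i < N)%nat -> p i < p (S i)) -> 0 <= b ->
  (forall i, (i < N)%nat -> 0 <= c i <= b) -> 0 <= step_function p c N X <= b.
Proof.
  intros Hp Hb Hc. destruct (in_cell_exists p N X) as [k Hk].
  rewrite (step_function_in_cell p N Hp c X k Hk).
  destruct k as [|j]; simpl; [lra|]. destruct (Nat.ltb_spec j N); [now apply Hc | lra].
Qed.

Definition cont_nonneg (g : R -> R) : Prop := forall s, 0 <= s -> forall eps, 0 < eps ->
  exists d, 0 < d /\ forall u, 0 <= u -> Rabs (u - s) < d -> Rabs (g u - g s) < eps.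

Lemma cont_nonneg_ext g1 g2 : cont_nonneg g1 -> (forall u, 0 <= u -> g1 u = g2 u) -> cont_nonneg g2.
Proof.
  intros H He s Hs eps Heps. destruct (H s Hs eps Heps) as [d [Hd Hu]].
  exists d. split; [exact Hd|]. intros u Hu0 Hus. rewrite <- !He by lra. auto.
Qed.

Lemma continuity_pt_delta g s : continuity_pt g s -> forall eps, 0 < eps ->
  exists d, 0 < d /\ forall u, Rabs (u - s) < d -> Rabs (g u - g s) < eps.
Proof.
  intros Hc eps Heps. destruct (Hc eps Heps) as [d [Hd Hu]].
  exists d. split; [exact Hd|]. intros u Hus.
  destruct (Req_dec u s) as [->|Hne].
  - unfold Rminus. rewrite Rplus_opp_r, Rabs_R0. exact Heps.
  - apply Hu. split; [split; [exact I | congruence] | exact Hus].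
Qed.

Lemma cont_nonneg_of_continuity_pt h g : (forall s, 0 <= s -> continuity_pt h s) ->
  (forall u, 0 <= u -> h u = g u) -> cont_nonneg g.
Proof.
  intros Hc He. apply (cont_nonneg_ext h); [|exact He].
  intros s Hs eps Heps. destruct (continuity_pt_delta h s (Hc s Hs) eps Heps) as [d [Hd Hu]].
  exists d. split; [exact Hd|]. intros u _ Hus. now apply Hu.
Qed.

(* Extending [g] by [g 0] to the left turns closure properties into those of [continuity_pt]. *)
Lemma continuity_pt_clamp g s : cont_nonneg g -> 0 <= s -> continuity_pt (fun u => g (Rmax u 0)) s.
Proof.
  intros Hg Hs eps He. destruct (Hg s Hs eps He) as [d [Hd Hu]].
  exists d. split; [exact Hd|]. intros u [_ Hus]. simpl in *. unfold R_dist in *.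
  rewrite (Rmax_left s 0) by lra. apply Hu; [apply Rmax_r|].
  unfold Rmax. destruct (Rle_dec u 0); [|exact Hus].
  rewrite Rabs_left1 in * by lra. lra.
Qed.

Section ContNonnegClosure.
Variables g1 g2 : R -> R.
Hypotheses (H1 : cont_nonneg g1) (H2 : cont_nonneg g2).

Let c1 s Hs := continuity_pt_clamp g1 s H1 Hs.
Let c2 s Hs := continuity_pt_clamp g2 s H2 Hs.

Lemma cont_nonneg_plus : cont_nonneg (fun s => g1 s + g2 s).
Proof.
  apply (cont_nonneg_of_continuity_pt (fun u => g1 (Rmax u 0) + g2 (Rmax u 0))).
  - intros s Hs. exact (continuity_pt_plus _ _ _ (c1 s Hs) (c2 s Hs)).
  - intros u Hu. now rewrite Rmax_left by lra.
Qed.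

Lemma cont_nonneg_minus : cont_nonneg (fun s => g1 s - g2 s).
Proof.
  apply (cont_nonneg_of_continuity_pt (fun u => g1 (Rmax u 0) - g2 (Rmax u 0))).
  - intros s Hs. exact (continuity_pt_minus _ _ _ (c1 s Hs) (c2 s Hs)).
  - intros u Hu. now rewrite Rmax_left by lra.
Qed.

Lemma cont_nonneg_mult : cont_nonneg (fun s => g1 s * g2 s).
Proof.
  apply (cont_nonneg_of_continuity_pt (fun u => g1 (Rmax u 0) * g2 (Rmax u 0))).
  - intros s Hs. exact (continuity_pt_mult _ _ _ (c1 s Hs) (c2 s Hs)).
  - intros u Hu. now rewrite Rmax_left by lra.
Qed.

Lemma cont_nonneg_div : (forall s, 0 <= s -> g2 s <> 0) -> cont_nonneg (fun s => g1 s / g2 s).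
Proof.
  intros Hnz. apply (cont_nonneg_of_continuity_pt (fun u => g1 (Rmax u 0) / g2 (Rmax u 0))).
  - intros s Hs. apply (continuity_pt_div _ _ _ (c1 s Hs) (c2 s Hs)).
    rewrite Rmax_left by lra. auto.
  - intros u Hu. now rewrite Rmax_left by lra.
Qed.

End ContNonnegClosure.

Lemma cont_nonneg_comp (phi g : R -> R) : cont_nonneg g ->
  (forall s, 0 <= s -> continuity_pt phi (g s)) -> cont_nonneg (fun s => phi (g s)).
Proof.
  intros Hg Hphi. apply (cont_nonneg_of_continuity_pt (fun u => phi (g (Rmax u 0)))).
  - intros s Hs. apply (continuity_pt_comp (fun u => g (Rmax u 0)) phi s).
    + now apply continuity_pt_clamp.
    + rewrite Rmax_left by lra. auto.
  - intros u Hu. now rewrite Rmax_left by lra.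
Qed.

Lemma cont_nonneg_const a : cont_nonneg (fun _ => a).
Proof.
  intros s _ eps He. exists 1. split; [lra|]. intros.
  unfold Rminus. rewrite Rplus_opp_r, Rabs_R0. exact He.
Qed.

Lemma cont_nonneg_id : cont_nonneg (fun s => s).
Proof. intros s _ eps He. exists eps. split; [exact He | auto]. Qed.

Lemma cont_nonneg_scal a : cont_nonneg (fun s => a * s).
Proof. apply cont_nonneg_mult; [apply cont_nonneg_const | apply cont_nonneg_id]. Qed.

Lemma exists_common_delta (P : nat -> R -> Prop) N :
  (forall k d d', 0 < d' <= d -> P k d -> P k d') ->
  (forall k, (k < N)%nat -> exists d, 0 < d /\ P k d) ->
  exists d, 0 < d /\ forall k, (k < N)%nat -> P k d.
Proof.
  intros Hmono. induction N as [|N IH]; intros H; [exists 1; split; [lra | intros; lia]|].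
  destruct IH as [d1 [Hd1 H1]]; [intros; apply H; lia|].
  destruct (H N (Nat.lt_succ_diag_r N)) as [d2 [Hd2 H2]].
  assert (Hm : 0 < Rmin d1 d2) by (apply Rmin_glb_lt; assumption).
  exists (Rmin d1 d2). split; [exact Hm|]. intros k Hk. destruct (Nat.eq_dec k N) as [->|].
  - apply (Hmono N d2); [split; [exact Hm | apply Rmin_r] | exact H2].
  - apply (Hmono k d1); [split; [exact Hm | apply Rmin_l] | apply H1; lia].
Qed.

Section FirstTouch.
Variables (N : nat) (f : nat -> R -> R) (c : R).
Hypothesis Hcont : forall k, (k < N)%nat -> cont_nonneg (f k).
Hypothesis Hinit : forall k, (k < N)%nat -> f k 0 < c.

Lemma all_below_near s : 0 <= s -> (forall k, (k < N)%nat -> f k s < c) ->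
  exists d, 0 < d /\ forall k u, (k < N)%nat -> 0 <= u -> Rabs (u - s) < d -> f k u < c.
Proof.
  intros Hs Hall.
  destruct (exists_common_delta (fun k d => forall u, 0 <= u -> Rabs (u - s) < d -> f k u < c) N)
    as [d [Hd Hu]]; [| |eauto].
  - intros k d d' Hd' HP u Hu Hus. apply HP; [exact Hu | lra].
  - intros k Hk. destruct (Hcont k Hk s Hs (c - f k s)) as [d [Hd Hu]];
      [pose proof (Hall k Hk); lra|].
    exists d. split; [exact Hd|]. intros u Hu0 Hus.
    specialize (Hu u Hu0 Hus). apply Rabs_def2 in Hu. lra.
Qed.

Lemma le_of_below_before g tau : cont_nonneg g -> 0 < tau ->
  (forall u, 0 <= u < tau -> g u < c) -> g tau <= c.
Proof.
  intros Hg Htau Hbelow. apply Rnot_lt_le. intros Hlt.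
  destruct (Hg tau (Rlt_le _ _ Htau) (g tau - c)) as [d [Hd Hu]]; [lra|].
  set (u := tau - Rmin d tau / 2).
  assert (0 < Rmin d tau) by (apply Rmin_glb_lt; lra).
  pose proof (Rmin_l d tau). pose proof (Rmin_r d tau).
  assert (Hus : Rabs (u - tau) < d) by (unfold u; rewrite Rabs_left; lra).
  specialize (Hu u ltac:(unfold u; lra) Hus). apply Rabs_def2 in Hu.
  assert (g u < c) by (apply Hbelow; unfold u; lra). lra.
Qed.

Lemma extend_below tau t1 : 0 <= tau < t1 ->
  (forall k u, (k < N)%nat -> 0 <= u < tau -> f k u < c) -> (forall k, (k < N)%nat -> f k tau < c) ->
  exists s, tau < s <= t1 /\ forall k u, (k < N)%nat -> 0 <= u <= s -> f k u < c.
Proof.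
  intros Htau Hbefore Hat.
  destruct (all_below_near tau (proj1 Htau) Hat) as [d [Hd Hnear]].
  pose proof (Rmin_l (tau + d / 2) t1). pose proof (Rmin_r (tau + d / 2) t1).
  exists (Rmin (tau + d / 2) t1). split; [split; [apply Rmin_glb_lt; lra | exact (Rmin_r _ _)]|].
  intros k u Hk Hu. destruct (Rlt_dec u tau); [apply Hbefore; [exact Hk | lra]|].
  apply Hnear; [exact Hk | lra |]. rewrite Rabs_right; lra.
Qed.

Lemma first_touch t1 j : (j < N)%nat -> 0 <= t1 -> c <= f j t1 ->
  exists tau i, 0 < tau /\ (i < N)%nat /\ f i tau = c /\
    (forall k, (k < N)%nat -> f k tau <= c) /\
    (forall k u, (k < N)%nat -> 0 <= u < tau -> f k u < c).
Proof.
  intros Hj Ht1 Hf.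
  set (E := fun s => 0 <= s <= t1 /\ forall k u, (k < N)%nat -> 0 <= u <= s -> f k u < c).
  assert (HE0 : E 0).
  { split; [lra|]. intros k u Hk Hu. replace u with 0 by lra. auto. }
  destruct (completeness E (ex_intro _ t1 (fun s Hs => proj2 (proj1 Hs))) (ex_intro _ 0 HE0))
    as [tau [Hub Hlub]].
  assert (Htau : 0 <= tau <= t1) by (split; [apply Hub, HE0 | apply Hlub; intros s [Hs _]; lra]).
  assert (Hbefore : forall k u, (k < N)%nat -> 0 <= u < tau -> f k u < c).
  { intros k u Hk Hu. destruct (classic (exists s, E s /\ u < s)) as [[s [[_ Hs] Hus]]|Hn].
    - apply Hs; [exact Hk | lra].
    - exfalso. assert (tau <= u); [|lra].
      apply Hlub. intros s Hs. apply Rnot_lt_le. intros Hlt. apply Hn. eauto. }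
  assert (Hat : forall k, (k < N)%nat -> f k tau <= c).
  { intros k Hk. destruct (Req_dec tau 0) as [->|]; [left; now apply Hinit|].
    apply le_of_below_before; [now apply Hcont | lra |]. intros u Hu. now apply Hbefore. }
  destruct (classic (exists i, (i < N)%nat /\ f i tau = c)) as [[i [Hi Heq]]|Hn].
  - assert (0 < tau) by (destruct (Req_dec tau 0) as [->|]; [specialize (Hinit i Hi)|]; lra).
    exists tau, i. repeat split; auto.
  - exfalso.
    assert (Hall : forall k, (k < N)%nat -> f k tau < c).
    { intros k Hk. destruct (Hat k Hk); [assumption|]. exfalso. apply Hn. eauto. }
    assert (tau < t1) by (destruct (Req_dec tau t1) as [->|]; [specialize (Hall j Hj)|]; lra).
    destruct (extend_below tau t1 ltac:(lra) Hbefore Hall) as [s [Hs Hbelow]].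
    assert (s <= tau) by (apply Hub; split; [lra | exact Hbelow]). lra.
Qed.

End FirstTouch.

Lemma derivative_neg_left f tau d : derivable_pt_lim f tau d -> d < 0 -> 0 < tau ->
  exists u, 0 <= u < tau /\ f tau < f u.
Proof.
  intros Hder Hd Htau. destruct (Hder (- d) ltac:(lra)) as [del Hdel].
  set (h := - (Rmin del tau / 2)).
  assert (0 < Rmin del tau) by (apply Rmin_glb_lt; [apply cond_pos | exact Htau]).
  pose proof (Rmin_l del tau). pose proof (Rmin_r del tau).
  specialize (Hdel h ltac:(unfold h; lra) ltac:(unfold h; rewrite Rabs_left; lra)).
  apply Rabs_def2 in Hdel as [Hq _].
  exists (tau + h). split; [unfold h; lra|].
  assert (h < 0) by (unfold h; lra).
  set (q := (f (tau + h) - f tau) / h) in Hq.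
  assert (f (tau + h) - f tau = q * h) by (unfold q; field; lra). nra.
Qed.

Lemma stays_below N (f : nat -> R -> R) c :
  (forall k, (k < N)%nat -> cont_nonneg (f k)) ->
  (forall k, (k < N)%nat -> f k 0 < c) ->
  (forall i tau, (i < N)%nat -> 0 < tau -> f i tau = c ->
     (forall k, (k < N)%nat -> f k tau <= c) ->
     exists d, d < 0 /\ derivable_pt_lim (f i) tau d) ->
  forall t k, 0 <= t -> (k < N)%nat -> f k t < c.
Proof.
  intros Hcont Hinit Htouch t k Ht Hk. apply Rnot_le_lt. intros Hf.
  destruct (first_touch N f c Hcont Hinit t k Hk Ht Hf)
    as [tau [i [Htau [Hi [Heq [Hat Hbefore]]]]]].
  destruct (Htouch i tau Hi Htau Heq Hat) as [d [Hd Hder]].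
  destruct (derivative_neg_left (f i) tau d Hder Hd Htau) as [u [Hu Hlt]].
  specialize (Hbefore i u Hi Hu). lra.
Qed.

Lemma le_of_perturbed g t : 0 <= t -> (forall eps c, 0 < eps -> 0 < c -> g - eps * t < c) -> g <= 0.
Proof.
  intros Ht H. apply Rnot_lt_le. intros Hg.
  assert (Heps : 0 < g / (2 * (t + 1))) by (apply Rdiv_lt_0_compat; lra).
  specialize (H _ (g / 2) Heps ltac:(lra)).
  assert (g / (2 * (t + 1)) * t <= g / 2); [|lra].
  apply Rmult_le_reg_r with (2 * (t + 1)); [lra|].
  replace (g / (2 * (t + 1)) * t * (2 * (t + 1))) with (g * t) by (field; lra).
  replace (g / 2 * (2 * (t + 1))) with (g * t + g) by field. lra.
Qed.

(* The [eps * u] tilt turns the weak sign condition into the strict one of [stays_below]. *)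
Lemma max_principle N (f : nat -> R -> R) c :
  (forall k, (k < N)%nat -> cont_nonneg (f k)) ->
  (forall k, (k < N)%nat -> f k 0 <= c) ->
  (forall i tau, (i < N)%nat -> 0 < tau -> (forall k, (k < N)%nat -> f k tau <= f i tau) ->
     exists d, d <= 0 /\ derivable_pt_lim (f i) tau d) ->
  forall t k, 0 <= t -> (k < N)%nat -> f k t <= c.
Proof.
  intros Hcont Hinit Hmax t k Ht Hk.
  enough (f k t - c <= 0) by lra.
  apply (le_of_perturbed _ t Ht). intros eps c' Heps Hc'.
  enough (f k t - eps * t < c + c') by lra.
  apply (stays_below N (fun k u => f k u - eps * u)); auto.
  - intros k' Hk'. apply cont_nonneg_minus; [now apply Hcont | apply cont_nonneg_scal].
  - intros k' Hk'. specialize (Hinit k' Hk'). lra.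
  - intros i tau Hi Htau Heq Hat.
    destruct (Hmax i tau Hi Htau) as [d [Hd Hder]].
    { intros k' Hk'. specialize (Hat k' Hk'). lra. }
    exists (d - eps * 1). split; [lra|].
    apply derivable_pt_lim_minus; [exact Hder|].
    apply (derivable_pt_lim_scal id), derivable_pt_lim_id.
Qed.

Section Lipschitz.
Variables (G : R -> R) (Rb : R).
Hypothesis HG_lip : forall a b, Rabs (G b - G a) <= Rb * Rabs (b - a).

Lemma Lipschitz_const_nonneg : 0 <= Rb.
Proof.
  pose proof (HG_lip 0 1). pose proof (Rabs_pos (G 1 - G 0)).
  rewrite Rminus_0_r, Rabs_R1 in H. lra.
Qed.

Lemma slope_le_Lipschitz a b : a < b -> (G b - G a) / (b - a) <= Rb.
Proof.
  intros Hab. pose proof (HG_lip a b). pose proof (Rle_abs (G b - G a)).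
  rewrite (Rabs_right (b - a)) in H by lra.
  apply Rmult_le_reg_r with (b - a); [lra|].
  replace ((G b - G a) / (b - a) * (b - a)) with (G b - G a) by (field; lra). lra.
Qed.

Lemma G_Rsup_sublevel g l a b : (G a - g < l) -> (forall x, G x - g < l -> x <= b) ->
  G (Rsup (fun x => G x - g < l)) = g + l /\ Rsup (fun x => G x - g < l) <= b.
Proof.
  set (E := fun x => G x - g < l). intros Ha Hb.
  destruct (Rsup_is_lub E (ex_intro _ b Hb) (ex_intro _ a Ha)) as [Hub Hlub].
  set (s := Rsup E) in *.
  pose proof Lipschitz_const_nonneg as HRb.
  assert (Hclose : forall e x, 0 < e -> Rabs (x - s) <= e / (Rb + 1) -> Rabs (G x - G s) < e).
  { intros e x He Hx. pose proof (HG_lip s x).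
    assert (Rb * Rabs (x - s) <= Rb * (e / (Rb + 1))) by (apply Rmult_le_compat_l; lra).
    assert (Rb * (e / (Rb + 1)) < e); [|lra].
    apply Rlt_le_trans with ((Rb + 1) * (e / (Rb + 1))); [|right; field; lra].
    apply Rmult_lt_compat_r; [apply Rdiv_lt_0_compat|]; lra. }
  split; [|apply Hlub; exact Hb].
  apply Rle_antisym; apply Rnot_lt_le; intros Hlt.
  - set (e := G s - g - l). assert (He : 0 < e / (Rb + 1)) by (apply Rdiv_lt_0_compat; unfold e; lra).
    destruct (classic (exists x, E x /\ s - e / (Rb + 1) < x)) as [[x [Hx Hxs]]|Hn].
    + assert (x <= s) by (apply Hub; exact Hx).
      specialize (Hclose e x ltac:(unfold e; lra) ltac:(rewrite Rabs_left1; lra)).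
      apply Rabs_def2 in Hclose. unfold E, e in *. lra.
    + assert (s <= s - e / (Rb + 1)); [|lra].
      apply Hlub. intros x Hx. apply Rnot_lt_le. intros Hlt2. apply Hn. eauto.
  - set (e := g + l - G s). assert (He : 0 < e / (Rb + 1)) by (apply Rdiv_lt_0_compat; unfold e; lra).
    assert (HE : E (s + e / (Rb + 1))).
    { specialize (Hclose e (s + e / (Rb + 1)) ltac:(unfold e; lra)
        ltac:(replace (s + e / (Rb + 1) - s) with (e / (Rb + 1)) by ring; rewrite Rabs_right; lra)).
      apply Rabs_def2 in Hclose. unfold E, e in *. lra. }
    specialize (Hub _ HE). lra.
Qed.

Lemma xbar_level xmin xmax L l N : 0 < l -> INR N * l = L -> xmin <= xmax ->
  (forall x, x <= xmin -> G x = 0) -> (forall x, xmax <= x -> G x = L) ->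
  forall k, (k <= N)%nat -> G (xbar G xmin l k) = INR k * l /\ xbar G xmin l k <= xmax.
Proof.
  intros Hl HNl Hx HG_left HG_right.
  induction k as [|k IH]; intros Hk.
  - simpl. rewrite HG_left by lra. split; [ring | exact Hx].
  - destruct (IH ltac:(lia)) as [Hlev _].
    assert (HkN : INR (S k) <= INR N) by (apply le_INR; lia). rewrite S_INR in *.
    simpl. rewrite Hlev, Rmult_plus_distr_r, Rmult_1_l.
    apply (G_Rsup_sublevel _ l xmin xmax).
    + rewrite HG_left by lra. pose proof (pos_INR k). nra.
    + intros x Hxl. apply Rnot_lt_le. intros Hlt. rewrite HG_right in Hxl by lra. nra.
Qed.

Lemma ydisc_initial_le xmin xmax L l N (x : nat -> R -> R) : 0 < l -> INR N * l = L ->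
  xmin <= xmax -> (forall z, z <= xmin -> G z = 0) -> (forall z, xmax <= z -> G z = L) ->
  (forall i, (i <= N)%nat -> x i 0 = xbar G xmin l i) ->
  (forall k, (k < N)%nat -> x k 0 < x (S k) 0) ->
  forall k, (k < N)%nat -> ydisc x l k 0 <= Rb.
Proof.
  intros Hl HNl Hx HG_left HG_right Hx0 Hgap k Hk.
  pose proof (Hgap k Hk) as Hg0. unfold ydisc. rewrite !Hx0 in * by lia.
  destruct (xbar_level xmin xmax L l N Hl HNl Hx HG_left HG_right k ltac:(lia)) as [Gk _].
  destruct (xbar_level xmin xmax L l N Hl HNl Hx HG_left HG_right (S k) Hk) as [GSk _].
  replace l with (G (xbar G xmin l (S k)) - G (xbar G xmin l k)) at 1
    by (rewrite GSk, Gk, S_INR; ring).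
  now apply slope_le_Lipschitz.
Qed.

End Lipschitz.

Lemma strict_decr_le (v : R -> R) : (forall a b, 0 <= a -> a < b -> v b < v a) ->
  forall a b, 0 <= a -> a <= b -> v b <= v a.
Proof. intros Hv a b Ha [Hab | <-]; [left; now apply Hv | right; reflexivity]. Qed.

Lemma derivative_nonpos_of_decr (v v' : R -> R) r :
  (forall a b, 0 <= a -> a < b -> v b < v a) -> 0 < r -> derivable_pt_lim v r (v' r) -> v' r <= 0.
Proof.
  intros Hv Hr Hder. apply Rnot_lt_le. intros Hpos.
  destruct (Hder (v' r) Hpos) as [del Hdel]. pose proof (cond_pos del).
  specialize (Hdel (del / 2) ltac:(lra) ltac:(rewrite Rabs_right; lra)).
  apply Rabs_def2 in Hdel as [_ Hq].
  assert (v (r + del / 2) < v r) by (apply Hv; lra).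
  assert ((v (r + del / 2) - v r) / (del / 2) < 0); [|lra].
  unfold Rdiv. apply Rmult_neg_pos; [lra | apply Rinv_0_lt_compat; lra].
Qed.

Section FollowTheLeader.
Variables (v v' : R -> R).
Hypothesis Hv_der : forall r, 0 < r -> derivable_pt_lim v r (v' r).
Hypothesis Hv_decr : forall a b, 0 <= a -> a < b -> v b < v a.
Hypothesis Hv3 : forall a b, 0 <= a -> a <= b -> b * v' b <= a * v' a.
Variables (N : nat) (l : R) (x : nat -> R -> R).
Hypothesis Hl : 0 < l.
Hypothesis Hgap : forall i, (i < N)%nat -> forall t, 0 <= t -> x i t < x (S i) t.
Hypothesis Hc0 : forall i, (i <= N)%nat -> forall eps, 0 < eps -> exists d, 0 < d /\
      forall t, 0 <= t < d -> Rabs (x i t - x i 0) < eps.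
Hypothesis HdN : forall t, 0 < t -> derivable_pt_lim (x N) t (v 0).
Hypothesis Hdi : forall i, (i < N)%nat -> forall t, 0 < t ->
      derivable_pt_lim (x i) t (v (ydisc x l i t)).

Local Notation y := (ydisc x l).

Definition vel k s := if Nat.ltb k N then v (y k s) else v 0.
Definition vel_slope k s := (vel (S k) s - vel k s) / (x (S k) s - x k s).
Definition vel_deriv k s := if Nat.ltb k N then v' (y k s) * (- y k s * vel_slope k s) else 0.

Lemma vel_lt k s : (k < N)%nat -> vel k s = v (y k s).
Proof. intros Hk. unfold vel. now rewrite (proj2 (Nat.ltb_lt k N) Hk). Qed.

Lemma vel_N s : vel N s = v 0.
Proof. unfold vel. now rewrite Nat.ltb_irrefl. Qed.

Lemma vel_deriv_lt k s : (k < N)%nat -> vel_deriv k s = v' (y k s) * (- y k s * vel_slope k s).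
Proof. intros Hk. unfold vel_deriv. now rewrite (proj2 (Nat.ltb_lt k N) Hk). Qed.

Lemma vel_deriv_N s : vel_deriv N s = 0.
Proof. unfold vel_deriv. now rewrite Nat.ltb_irrefl. Qed.

Lemma gap_pos k s : (k < N)%nat -> 0 <= s -> 0 < x (S k) s - x k s.
Proof. intros Hk Hs. pose proof (Hgap k Hk s Hs). lra. Qed.

Lemma y_pos k s : (k < N)%nat -> 0 <= s -> 0 < y k s.
Proof. intros Hk Hs. apply Rdiv_lt_0_compat; [exact Hl | now apply gap_pos]. Qed.

Lemma vel_le_vmax k s : (k <= N)%nat -> 0 <= s -> vel k s <= v 0.
Proof.
  intros Hk Hs. destruct (Nat.eq_dec k N) as [->|]; [rewrite vel_N; lra|].
  rewrite vel_lt by lia. apply (strict_decr_le v Hv_decr); [lra | left; apply y_pos; lia || exact Hs].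
Qed.

Lemma x_deriv k s : (k <= N)%nat -> 0 < s -> derivable_pt_lim (x k) s (vel k s).
Proof.
  intros Hk Hs. destruct (Nat.eq_dec k N) as [->|].
  - rewrite vel_N. now apply HdN.
  - rewrite vel_lt by lia. apply Hdi; [lia | exact Hs].
Qed.

Lemma x_cont k : (k <= N)%nat -> cont_nonneg (x k).
Proof.
  intros Hk s [Hs | <-] eps He.
  - assert (Hc : continuity_pt (x k) s).
    { apply derivable_continuous_pt. exists (vel k s). now apply x_deriv. }
    destruct (continuity_pt_delta (x k) s Hc eps He) as [d [Hd Hu]].
    exists d. split; [exact Hd|]. intros u _. apply Hu.
  - destruct (Hc0 k Hk eps He) as [d [Hd Hu]]. exists d. split; [exact Hd|].
    intros u Hu0 Hus. rewrite Rminus_0_r, Rabs_right in Hus by lra. apply Hu. lra.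
Qed.

Lemma gap_cont k : (k < N)%nat -> cont_nonneg (fun s => x (S k) s - x k s).
Proof. intros Hk. apply cont_nonneg_minus; apply x_cont; lia. Qed.

Lemma y_cont k : (k < N)%nat -> cont_nonneg (y k).
Proof.
  intros Hk. apply (cont_nonneg_div (fun _ => l)); [apply cont_nonneg_const | now apply gap_cont |].
  intros s Hs. pose proof (gap_pos k s Hk Hs). lra.
Qed.

Lemma vel_cont k : (k <= N)%nat -> cont_nonneg (vel k).
Proof.
  intros Hk. destruct (Nat.eq_dec k N) as [->|].
  - apply (cont_nonneg_ext (fun _ => v 0)); [apply cont_nonneg_const | intros; now rewrite vel_N].
  - apply (cont_nonneg_ext (fun s => v (y k s))); [|intros; rewrite vel_lt; [reflexivity | lia]].
    apply cont_nonneg_comp; [apply y_cont; lia|].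
    intros s Hs. apply derivable_continuous_pt. exists (v' (y k s)).
    apply Hv_der, y_pos; [lia | exact Hs].
Qed.

Lemma vel_slope_cont k : (k < N)%nat -> cont_nonneg (vel_slope k).
Proof.
  intros Hk. apply cont_nonneg_div; [apply cont_nonneg_minus; apply vel_cont; lia | now apply gap_cont |].
  intros s Hs. pose proof (gap_pos k s Hk Hs). lra.
Qed.

Lemma gap_deriv k s : (k < N)%nat -> 0 < s ->
  derivable_pt_lim (fun u => x (S k) u - x k u) s (vel (S k) s - vel k s).
Proof. intros Hk Hs. apply derivable_pt_lim_minus; apply x_deriv; lia || exact Hs. Qed.

Lemma y_deriv k s : (k < N)%nat -> 0 < s -> derivable_pt_lim (y k) s (- y k s * vel_slope k s).
Proof.
  intros Hk Hs. pose proof (gap_pos k s Hk ltac:(lra)).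
  pose proof (derivable_pt_lim_div (fct_cte l) _ s _ _ (derivable_pt_lim_const l s)
    (gap_deriv k s Hk Hs) ltac:(lra)) as Hder.
  replace (- y k s * vel_slope k s) with
    ((0 * (x (S k) s - x k s) - (vel (S k) s - vel k s) * fct_cte l s) / Rsqr (x (S k) s - x k s)).
  - exact (derivable_pt_lim_ext _ _ _ _ (fun u => eq_refl) Hder).
  - unfold ydisc, vel_slope, fct_cte, Rsqr. field. lra.
Qed.

Lemma vel_deriv_spec k s : (k <= N)%nat -> 0 < s -> derivable_pt_lim (vel k) s (vel_deriv k s).
Proof.
  intros Hk Hs. destruct (Nat.eq_dec k N) as [->|].
  - rewrite vel_deriv_N. apply (derivable_pt_lim_ext (fun _ => v 0)).
    + intros u. now rewrite vel_N.
    + apply derivable_pt_lim_const.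
  - rewrite vel_deriv_lt by lia. apply (derivable_pt_lim_ext (comp v (y k))).
    + intros u. unfold comp. rewrite vel_lt; [reflexivity | lia].
    + apply derivable_pt_lim_comp; [apply y_deriv; [lia | exact Hs]|].
      apply Hv_der, y_pos; [lia | lra].
Qed.

Lemma vel_slope_deriv k s : (k < N)%nat -> 0 < s -> derivable_pt_lim (vel_slope k) s
  ((vel_deriv (S k) s - vel_deriv k s) / (x (S k) s - x k s) - vel_slope k s * vel_slope k s).
Proof.
  intros Hk Hs. pose proof (gap_pos k s Hk ltac:(lra)).
  pose proof (derivable_pt_lim_div _ _ s _ _
     (derivable_pt_lim_minus _ _ _ _ _ (vel_deriv_spec (S k) s ltac:(lia) Hs)
        (vel_deriv_spec k s ltac:(lia) Hs))
     (gap_deriv k s Hk Hs) ltac:(lra)) as Hder.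
  match goal with |- derivable_pt_lim _ _ ?d => replace d with
    (((vel_deriv (S k) s - vel_deriv k s) * (x (S k) s - x k s)
      - (vel (S k) s - vel k s) * (vel (S k) s - vel k s)) / Rsqr (x (S k) s - x k s)) end.
  - exact (derivable_pt_lim_ext _ _ _ _ (fun u => eq_refl) Hder).
  - unfold vel_slope, Rsqr. field. lra.
Qed.

Lemma vel_slope_nonneg k s : (k < N)%nat -> 0 <= s ->
  ((S k < N)%nat -> y (S k) s <= y k s) -> 0 <= vel_slope k s.
Proof.
  intros Hk Hs Hy. pose proof (gap_pos k s Hk Hs).
  assert (vel k s <= vel (S k) s).
  { rewrite (vel_lt k) by exact Hk. destruct (Nat.eq_dec (S k) N) as [HkN|].
    - rewrite HkN, vel_N. apply (strict_decr_le v Hv_decr); [lra | left; now apply y_pos].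
    - rewrite vel_lt by lia. apply (strict_decr_le v Hv_decr); [left; apply y_pos; lia || lra|].
      apply Hy. lia. }
  unfold vel_slope. apply Rle_mult_inv_pos; lra.
Qed.

Lemma ydisc_le (Rb : R) : (forall k, (k < N)%nat -> y k 0 <= Rb) ->
  forall k s, (k < N)%nat -> 0 <= s -> y k s <= Rb.
Proof.
  intros Hinit k s Hk Hs. apply (max_principle N y Rb y_cont Hinit); [|exact Hs | exact Hk].
  intros i tau Hi Htau Hmax. exists (- y i tau * vel_slope i tau). split.
  - assert (0 <= vel_slope i tau) by (apply vel_slope_nonneg; [exact Hi | lra | apply Hmax]).
    pose proof (y_pos i tau Hi ltac:(lra)). nra.
  - now apply y_deriv.
Qed.

(* (V3) makes [rho |-> -rho v'(rho)] nondecreasing, which orders the two velocity derivatives. *)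
Lemma vel_deriv_le k s : (k < N)%nat -> 0 < s -> 0 < vel_slope k s ->
  ((S k < N)%nat -> vel_slope (S k) s <= vel_slope k s) -> vel_deriv (S k) s <= vel_deriv k s.
Proof.
  intros Hk Hs HZ HZS. rewrite (vel_deriv_lt k) by exact Hk.
  pose proof (y_pos k s Hk ltac:(lra)) as Hyk.
  pose proof (derivative_nonpos_of_decr v v' _ Hv_decr Hyk (Hv_der _ Hyk)) as Hv'k.
  destruct (Nat.eq_dec (S k) N) as [HkN|Hne].
  - rewrite HkN, vel_deriv_N. assert (0 <= y k s * vel_slope k s) by nra. nra.
  - rewrite vel_deriv_lt by lia.
    pose proof (y_pos (S k) s ltac:(lia) ltac:(lra)) as HySk.
    pose proof (derivative_nonpos_of_decr v v' _ Hv_decr HySk (Hv_der _ HySk)) as Hv'Sk.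
    assert (Hyy : y (S k) s < y k s).
    { apply Rnot_le_lt. intros Hle.
      assert (vel (S k) s <= vel k s).
      { rewrite !vel_lt by lia. now apply (strict_decr_le v Hv_decr); [lra|]. }
      pose proof (Rinv_0_lt_compat _ (gap_pos k s Hk ltac:(lra))).
      assert (vel_slope k s <= 0); [unfold vel_slope, Rdiv; nra | lra]. }
    pose proof (Hv3 (y (S k) s) (y k s) ltac:(lra) ltac:(lra)).
    specialize (HZS ltac:(lia)).
    set (a1 := - (y (S k) s * v' (y (S k) s))). set (a0 := - (y k s * v' (y k s))).
    assert (0 <= a1) by (unfold a1; nra). assert (a1 <= a0) by (unfold a1, a0; lra).
    replace (v' (y (S k) s) * (- y (S k) s * vel_slope (S k) s)) with (a1 * vel_slope (S k) s)
      by (unfold a1; ring).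
    replace (v' (y k s) * (- y k s * vel_slope k s)) with (a0 * vel_slope k s) by (unfold a0; ring).
    destruct (Rle_dec 0 (vel_slope (S k) s)); nra.
Qed.

Lemma time_vel_slope_le k s : (k < N)%nat -> 0 < s -> s * vel_slope k s <= 1.
Proof.
  intros Hk Hs. apply Rnot_lt_le. intros Hlt.
  remember (s * vel_slope k s) as c eqn:Hc.
  enough (s * vel_slope k s < c) by lra.
  apply (stays_below N (fun k u => u * vel_slope k u) c); [| | | lra | exact Hk].
  - intros k' Hk'. apply cont_nonneg_mult; [apply cont_nonneg_id | now apply vel_slope_cont].
  - intros k' Hk'. rewrite Rmult_0_l. lra.
  - intros i tau Hi Htau Heq Hall.
    assert (HZ : 0 < vel_slope i tau) by nra.
    assert (Hle : vel_deriv (S i) tau <= vel_deriv i tau).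
    { apply vel_deriv_le; [exact Hi | exact Htau | exact HZ |].
      intros HSi. specialize (Hall (S i) HSi). nra. }
    pose proof (Rinv_0_lt_compat _ (gap_pos i tau Hi ltac:(lra))).
    set (q := (vel_deriv (S i) tau - vel_deriv i tau) / (x (S i) tau - x i tau)).
    assert (q <= 0) by (unfold q, Rdiv; nra).
    exists (1 * vel_slope i tau + tau * (q - vel_slope i tau * vel_slope i tau)). split; [nra|].
    apply (derivable_pt_lim_mult id (vel_slope i)); [apply derivable_pt_lim_id|].
    now apply vel_slope_deriv.
Qed.

Lemma vel_increment_le k t : (k < N)%nat -> 0 < t ->
  vel (S k) t - vel k t <= (x (S k) t - x k t) / t.
Proof.
  intros Hk Ht. pose proof (time_vel_slope_le k t Hk Ht) as HO.
  pose proof (gap_pos k t Hk ltac:(lra)). unfold vel_slope in HO.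
  apply Rmult_le_reg_l with t; [exact Ht|].
  replace (t * ((x (S k) t - x k t) / t)) with (x (S k) t - x k t) by (field; lra).
  replace (t * (vel (S k) t - vel k t)) with
    (t * ((vel (S k) t - vel k t) / (x (S k) t - x k t)) * (x (S k) t - x k t)) by (field; lra).
  nra.
Qed.

Lemma leader_le s : 0 <= s -> x N s <= x N 0 + v 0 * s.
Proof.
  intros Hs. enough (x N s - x N 0 - v 0 * s <= 0) by lra.
  refine (max_principle 1 (fun _ u => x N u - x N 0 - v 0 * u) 0 _ _ _ s 0%nat Hs ltac:(lia)).
  - intros _ _. apply cont_nonneg_minus; [|apply cont_nonneg_scal].
    apply cont_nonneg_minus; [apply x_cont; lia | apply cont_nonneg_const].
  - intros _ _. lra.
  - intros _ tau _ Htau _. exists (vel N tau - 0 - v 0 * 1). split; [rewrite vel_N; lra|].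
    apply derivable_pt_lim_minus; [apply derivable_pt_lim_minus|].
    + apply x_deriv; [lia | exact Htau].
    + apply derivable_pt_lim_const.
    + apply (derivable_pt_lim_scal id), derivable_pt_lim_id.
Qed.

Lemma follower_ge Rb s : (0 < N)%nat -> (forall k, (k < N)%nat -> y k 0 <= Rb) -> 0 <= s ->
  x 0 0 + v Rb * s <= x 0%nat s.
Proof.
  intros HN Hinit Hs. enough (x 0%nat 0 + v Rb * s - x 0%nat s <= 0) by lra.
  refine (max_principle 1 (fun _ u => x 0%nat 0 + v Rb * u - x 0%nat u) 0 _ _ _ s 0%nat Hs ltac:(lia)).
  - intros _ _. apply cont_nonneg_minus; [|apply x_cont; lia].
    apply cont_nonneg_plus; [apply cont_nonneg_const | apply cont_nonneg_scal].
  - intros _ _. lra.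
  - intros _ tau _ Htau _. exists (0 + v Rb * 1 - vel 0 tau). split.
    + rewrite vel_lt by exact HN.
      assert (v Rb <= v (y 0 tau)); [|lra].
      apply (strict_decr_le v Hv_decr); [left; apply y_pos; lra || exact HN|].
      apply (ydisc_le Rb Hinit); [exact HN | lra].
    + apply derivable_pt_lim_minus; [apply derivable_pt_lim_plus|].
      * apply derivable_pt_lim_const.
      * apply (derivable_pt_lim_scal id), derivable_pt_lim_id.
      * apply x_deriv; [lia | exact Htau].
Qed.

Lemma jump_sum_le_spread t : 0 < t -> jump_sum (fun i => y i t) N v <= 2 * ((x N t - x 0%nat t) / t).
Proof.
  intros Ht. set (U := fun k => v (step_value (fun i => y i t) N k)).
  assert (HU : forall k, U (S k) = vel k t) by (intros k; unfold U, vel; simpl; now destruct Nat.ltb).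
  change (sumR (S N) (fun k => Rabs (U (S k) - U k)) <= 2 * ((x N t - x 0%nat t) / t)).
  rewrite sumR_abs_increments_loop by (rewrite HU, vel_N; reflexivity).
  apply Rmult_le_compat_l; [lra|].
  rewrite sumR_shift, HU. change (U 0%nat) with (v 0).
  rewrite Rmax_right by (pose proof (vel_le_vmax 0 t ltac:(lia) ltac:(lra)); lra).
  replace ((x N t - x 0%nat t) / t) with (x N t / t - x 0%nat t / t) by (field; lra).
  rewrite <- (sumR_telescope N (fun k => x k t / t)), Rplus_0_l.
  apply sumR_le. intros k Hk. rewrite !HU. apply Rmax_lub.
  - replace (x (S k) t / t - x k t / t) with ((x (S k) t - x k t) / t) by (field; lra).
    now apply vel_increment_le.
  - replace (x (S k) t / t - x k t / t) with ((x (S k) t - x k t) / t) by (field; lra).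
    apply Rle_mult_inv_pos; [pose proof (gap_pos k t Hk ltac:(lra)); lra | exact Ht].
Qed.

Lemma jump_sum_bound Rb t : (0 < N)%nat -> (forall k, (k < N)%nat -> y k 0 <= Rb) -> 0 < t ->
  jump_sum (fun i => y i t) N v <= 2 * ((x N 0 - x 0%nat 0) / t + (v 0 - v Rb)).
Proof.
  intros HN Hinit Ht. eapply Rle_trans; [now apply jump_sum_le_spread|].
  pose proof (leader_le t (Rlt_le _ _ Ht)). pose proof (follower_ge Rb t HN Hinit (Rlt_le _ _ Ht)).
  apply Rmult_le_compat_l; [lra|].
  replace ((x N 0 - x 0%nat 0) / t + (v 0 - v Rb))
    with ((x N 0 - x 0%nat 0 + (v 0 - v Rb) * t) / t) by (field; lra).
  unfold Rdiv. apply Rmult_le_compat_r; [left; now apply Rinv_0_lt_compat | lra].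
Qed.

End FollowTheLeader.

Lemma Nn_elln L n : 0 < L -> (0 < Nn n)%nat /\ 0 < elln L n /\ INR (Nn n) * elln L n = L.
Proof.
  intros HL. assert (H2n : 0 < 2 ^ n) by (apply pow_lt; lra).
  split; [apply Nat.neq_0_lt_0, Nat.pow_nonzero; lia|].
  split; [now apply Rdiv_lt_0_compat|].
  unfold Nn, elln. rewrite pow_INR. replace (INR 2) with 2 by reflexivity. field. lra.
Qed.

Lemma Rdiv_le_compat a b t delta : a <= b -> 0 <= b -> 0 < delta <= t -> a / t <= b / delta.
Proof.
  intros Hab Hb Ht. apply Rle_trans with (b / t); unfold Rdiv.
  - apply Rmult_le_compat_r; [left; apply Rinv_0_lt_compat|]; lra.
  - apply Rmult_le_compat_l; [|apply Rinv_le_contravar]; lra.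
Qed.

Lemma v_step_function_range (v : R -> R) : (forall a b, 0 <= a -> a < b -> v b < v a) ->
  forall p c N b X, (forall i, (i < N)%nat -> p i < p (S i)) -> 0 <= b ->
  (forall i, (i < N)%nat -> 0 <= c i <= b) -> v b <= v (step_function p c N X) <= v 0.
Proof.
  intros Hv p c N b X Hp Hb Hc. pose proof (step_function_range p c N b X Hp Hb Hc).
  split; apply (strict_decr_le v Hv); lra.
Qed.

Theorem proposition3p11
  (v v' : R -> R)
  (Hv_der : forall r, 0 < r -> derivable_pt_lim v r (v' r))
  (Hv_der0 : forall eps, 0 < eps -> exists d, 0 < d /\
      forall h, 0 < h < d -> Rabs ((v h - v 0) / h - v' 0) < eps)
  (Hv'_cont : forall r, 0 <= r -> forall eps, 0 < eps -> exists d, 0 < d /\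
      forall s, 0 <= s -> Rabs (s - r) < d -> Rabs (v' s - v' r) < eps)
  (Hv_decr : forall a b, 0 <= a -> a < b -> v b < v a)
  (Hv3 : forall a b, 0 <= a -> a <= b -> b * v' b <= a * v' a)
  (L : R) (HL : 0 < L)
  (G : R -> R) (Rb xmin xmax : R)
  (HG_mono : forall a b, a <= b -> G a <= G b)
  (HG_lip : forall a b, Rabs (G b - G a) <= Rb * Rabs (b - a))
  (HG_Rmin : forall R', (forall a b, Rabs (G b - G a) <= R' * Rabs (b - a)) -> Rb <= R')
  (Hxminmax : xmin <= xmax)
  (HG_left : forall x, x <= xmin -> G x = 0)
  (HG_right : forall x, xmax <= x -> G x = L)
  (HG_min : forall x, xmin < x -> 0 < G x)
  (HG_max : forall x, x < xmax -> G x < L)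
  (delta : R) (Hdelta : 0 < delta) :
  forall (n : nat) (x : nat -> R -> R),
    FTL_solution v (Nn n) (elln L n) (xbar G xmin (elln L n)) x ->
    forall t, delta <= t ->
      let C := 3 * (v 0 - v Rb) + 2 * ((xmax - xmin) / delta) in
      TV (fun X => v (rho_hat x (elln L n) (Nn n) t X))
        = TV (fun z => v (rho_check x (elln L n) (Nn n) t z)) /\
      TV_le (fun X => v (rho_hat x (elln L n) (Nn n) t X)) C /\
      TV_le (fun z => v (rho_check x (elln L n) (Nn n) t z)) C /\
      (forall X, v Rb <= v (rho_hat x (elln L n) (Nn n) t X) <= v 0) /\
      (forall z, 0 <= z <= L ->
         v Rb <= v (rho_check x (elln L n) (Nn n) t z) <= v 0).
Proof.
  intros n x [Hx0 [Hgap [Hc0 [HdN Hdi]]]] t Ht C.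
  destruct (Nn_elln L n HL) as [HN [Hl HNl]].
  set (N := Nn n) in *. set (l := elln L n) in *.
  pose proof (Lipschitz_const_nonneg G Rb HG_lip) as HRb.
  assert (Hvmax : v Rb <= v 0) by (apply (strict_decr_le v Hv_decr); lra).
  pose proof (ydisc_initial_le G Rb HG_lip xmin xmax L l N x Hl HNl Hxminmax HG_left HG_right Hx0
    (fun k Hk => Hgap k Hk 0 (Rle_refl 0))) as Hinit.
  set (c := fun i => ydisc x l i t).
  assert (Hrange : forall i, (i < N)%nat -> 0 <= c i <= Rb).
  { intros i Hi. split; [left; apply (y_pos N l x Hl Hgap); [exact Hi | lra]|].
    apply (ydisc_le v Hv_decr N l x Hl Hgap Hc0 HdN Hdi Rb Hinit); [exact Hi | lra]. }
  assert (Hjump : jump_sum c N v <= C).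
  { eapply Rle_trans; [apply (jump_sum_bound v v' Hv_der Hv_decr Hv3 N l x Hl Hgap Hc0 HdN Hdi Rb t);
                       auto; lra|].
    destruct (xbar_level G Rb HG_lip xmin xmax L l N Hl HNl Hxminmax HG_left HG_right N (le_n N))
      as [_ HxN].
    rewrite !Hx0 by lia.
    pose proof (Rdiv_le_compat (xbar G xmin l N - xmin) (xmax - xmin) t delta
      ltac:(lra) ltac:(lra) ltac:(lra)).
    unfold C. simpl. lra. }
  assert (Hhat : forall i, (i < N)%nat -> x i t < x (S i) t) by (intros i Hi; apply Hgap; [exact Hi | lra]).
  assert (Hcheck : forall i, (i < N)%nat -> INR i * l < INR (S i) * l) by (intros; rewrite S_INR; lra).
  destruct (TV_step_function _ c N v Hhat) as [E1 T1], (TV_step_function _ c N v Hcheck) as [E2 T2].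
  split; [|split; [|split; [|split]]].
  - exact (eq_trans E1 (eq_sym E2)).
  - intros li Hli. exact (Rle_trans _ _ _ (T1 li Hli) Hjump).
  - intros li Hli. exact (Rle_trans _ _ _ (T2 li Hli) Hjump).
  - intros X. exact (v_step_function_range v Hv_decr _ c N Rb X Hhat HRb Hrange).
  - intros z _. exact (v_step_function_range v Hv_decr _ c N Rb z Hcheck HRb Hrange).
Qed.
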